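(* Fix $r\in(0,\pi/2)$ and let $s(\ell)=\sin^3\ell$, $s^{(-1)}$ its primitive vanishing at $0$ and $s^{(-2)}$ the primitive of $s^{(-1)}$ vanishing at $0$. Define, for $\ell\in[0,\pi)$ and $\alpha,\beta\in[0,\pi/2)$, \[g(\ell,\alpha,\beta) =\frac43 \ell - \frac{s(\ell)}{9\tan^2r \cos\alpha\cos\beta} -\frac{s^{(-1)}(\ell)}{3\tan r}\left(\frac1{\cos\alpha}+\frac1{\cos\beta}\right)-s^{(-2)}(\ell),\] and $f(\alpha,\beta)=\sup_\ell g(\ell,\alpha,\beta)$. Then: (1) for each fixed $\alpha$, the maximum of $\ell\mapsto g(\ell,\alpha,\alpha)$ is attained at $\ell=2\arctan(\tan r\cos\alpha)$ and only there; (2) for all $\alpha,\beta$, $f(\alpha,\beta)\le \frac12\left(f(\alpha,\alpha)+f(\beta,\beta)\right)$, with equality only for $\alpha=\beta$. *)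

From Stdlib Require Import Reals Lra.
From Coquelicot Require Import Coquelicot.
Open Scope R_scope.

Definition s (l : R) : R := (sin l) ^ 3.

Definition s1 (l : R) : R := RInt s 0 l.

Definition s2 (l : R) : R := RInt s1 0 l.

Definition gfun (r l a b : R) : R :=
  4 / 3 * l
  - s l / (9 * (tan r) ^ 2 * cos a * cos b)
  - s1 l / (3 * tan r) * (1 / cos a + 1 / cos b)
  - s2 l.

Definition fsup (r a b : R) : R :=
  real (Lub_Rbar (fun y => exists l, 0 <= l < PI /\ y = gfun r l a b)).

(* Substituting the closed forms of s^(-1) and s^(-2) and writing
   1 / (tan r cos a) = cot p1, 1 / (tan r cos b) = cot p2 turns g into an explicit
   trigonometric function G of l whose derivative is a positive multiple of
   crit p1 p2 l = cos (p1 - p2) - cos (p1 + p2 - l) + sin l sin (p1 + p2 - l).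
   At an interior maximiser L we get crit = 0 and crit' <= 0, which forces
   x = p1 + p2 - L into [0, pi/2); there the deficit of G(L) with respect to the mean
   of h(p) = 4p/3 + (4/9) sin p cos p is an explicit function of x vanishing at 0 with
   positive derivative, so it is positive unless x = 0, which in turn forces p1 = p2.
   The endpoints l = 0, pi lie strictly below the mean. Since f(a, a) = h(p), both
   claims follow, the maximiser on the diagonal being l = 2p. *)

From Stdlib Require Import Reals Lra Nsatz.
From Coquelicot Require Import Coquelicot.
Open Scope R_scope.

Ltac trig_identity x :=
  let H := fresh in
  assert (H := sin2_cos2 x); unfold Rsqr in H;
  field_simplify_eq; [simpl; nsatz | ..]; repeat split; auto.

Lemma sin_cos_pos (p : R) : 0 < p < PI/2 -> 0 < sin p /\ 0 < cos p.
Proof.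
  intros hp. assert (PI2 := PI2_RGT_0).
  split; [apply sin_gt_0 | apply cos_gt_0]; lra.
Qed.

Lemma one_add_cos_pos (z : R) : 0 <= z < PI -> 0 < 1 + cos z.
Proof. intros hz. assert (cos PI < cos z) by (apply cos_decreasing_1; lra). rewrite cos_PI in *. lra. Qed.

Lemma half_angle (L : R) :
  sin L = 2 * sin (L/2) * cos (L/2) /\ cos L = cos (L/2) * cos (L/2) - sin (L/2) * sin (L/2).
Proof.
  replace L with (2 * (L/2)) at 1 4 by field.
  rewrite sin_2a, cos_2a. split; ring.
Qed.

Lemma cos_sum_sub (p1 p2 l : R) : cos (p1 + p2 - l) =
  (cos p1 * cos p2 - sin p1 * sin p2) * cos l + (sin p1 * cos p2 + cos p1 * sin p2) * sin l.
Proof. rewrite cos_minus, cos_plus, sin_plus. ring. Qed.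

Lemma sin_sum_sub (p1 p2 l : R) : sin (p1 + p2 - l) =
  (sin p1 * cos p2 + cos p1 * sin p2) * cos l - (cos p1 * cos p2 - sin p1 * sin p2) * sin l.
Proof. rewrite sin_minus, cos_plus, sin_plus. ring. Qed.

(* With A = L - p1 - p2, this rules out a critical maximum L of G beyond p1 + p2. *)
Lemma sin_add_lt_of_cos_bound (A B : R) : 0 < A < B -> B < PI ->
  cos A + sin B * sin A <= 1 -> sin (A + B) < sin A.
Proof.
  intros hAB hB hcos. assert (PI2 := PI2_RGT_0).
  assert (hsA : 0 < sin A) by (apply sin_gt_0; lra).
  assert (hsB : 0 < sin B) by (apply sin_gt_0; lra).
  assert (hcAB : cos B < cos A) by (apply cos_decreasing_1; lra).
  assert (EA := sin2_cos2 A). assert (EB := sin2_cos2 B). unfold Rsqr in EA, EB.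
  rewrite sin_plus. apply Rnot_le_lt. intro hsin.
  set (sA := sin A) in *. set (cA := cos A) in *.
  set (sB := sin B) in *. set (cB := cos B) in *.
  assert (hB1 : sB * (1 + cA) <= sA).
  { assert (sB * sA * (1 + cA) <= (1 - cA) * (1 + cA)) by (apply Rmult_le_compat_r; nra).
    nra. }
  destruct (Rle_lt_dec cA 0) as [hc | hc]; [nra|].
  assert (hB2 : 1 - cB <= cA / (1 + cA)).
  { apply Rmult_le_reg_r with (sA * (1 + cA)); [nra|]. field_simplify; nra. }
  assert (cB * (1 + cA) >= 1).
  { apply Rmult_le_compat_r with (r := 1 + cA) in hB2; [|lra]. field_simplify in hB2; nra. }
  nra.
Qed.

Lemma increasing_of_deriv_pos (f f' : R -> R) (a b : R) : a < b ->
  (forall z, a <= z <= b -> derivable_pt_lim f z (f' z)) ->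
  (forall z, a < z < b -> 0 < f' z) -> f a < f b.
Proof.
  intros hab df hpos.
  destruct (MVT_cor2 f f' a b hab df) as [z [hz hzab]].
  specialize (hpos z hzab). nra.
Qed.

Lemma decreasing_of_deriv_neg (f f' : R -> R) (a b : R) : a < b ->
  (forall z, a <= z <= b -> derivable_pt_lim f z (f' z)) ->
  (forall z, a < z < b -> f' z < 0) -> f b < f a.
Proof.
  intros hab df hneg.
  destruct (MVT_cor2 f f' a b hab df) as [z [hz hzab]].
  specialize (hneg z hzab). nra.
Qed.

Lemma deriv_pos_lt_left (f : R -> R) (x l : R) : derivable_pt_lim f x l -> 0 < l ->
  exists e, 0 < e /\ forall z, x - e < z < x -> f z < f x.
Proof.
  intros df hl.
  destruct (df (l / 2) ltac:(lra)) as [d hd].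
  exists d. split; [apply cond_pos|]. intros z hz.
  assert (hh := hd (z - x) ltac:(lra) ltac:(rewrite Rabs_left; lra)).
  replace (x + (z - x)) with z in hh by ring.
  apply Rabs_def2 in hh as [_ hh].
  assert (hq : 0 < (f z - f x) / (z - x)) by lra.
  assert (f z - f x = (f z - f x) / (z - x) * (z - x)) by (field; lra).
  nra.
Qed.

Lemma RInt_antiderivative (F f : R -> R) (a b : R) :
  (forall x, is_derive F x (f x)) -> (forall x, ex_derive f x) ->
  RInt f a b = F b - F a.
Proof.
  intros dF df. apply is_RInt_unique, (is_RInt_derive F f).
  - intros x _; apply dF.
  - intros x _; apply (ex_derive_continuous f), df.
Qed.

Lemma Lub_Rbar_real_bounds (E : R -> Prop) (y0 M : R) :
  E y0 -> (forall y, E y -> y <= M) -> y0 <= real (Lub_Rbar E) <= M.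
Proof.
  intros h0 hM. destruct (Lub_Rbar_correct E) as [ub least].
  assert (Rbar_le y0 (Lub_Rbar E)) by (apply ub; exact h0).
  assert (Rbar_le (Lub_Rbar E) M) by (apply least; intros y hy; apply hM, hy).
  destruct (Lub_Rbar E); simpl in *; try contradiction. lra.
Qed.

Definition s1_closed (l : R) : R := 2/3 - cos l + (cos l)^3/3.
Definition s2_closed (l : R) : R := 2*l/3 - 2/3 * sin l - (sin l)^3/9.

Lemma s1_closed_form (l : R) : s1 l = s1_closed l.
Proof.
  unfold s1. rewrite (RInt_antiderivative s1_closed).
  - unfold s1_closed. rewrite cos_0. field.
  - intro x. unfold s1_closed, s. auto_derive; auto. trig_identity x.
  - intro x. unfold s. auto_derive. auto.
Qed.

Lemma s2_closed_form (l : R) : s2 l = s2_closed l.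
Proof.
  unfold s2. rewrite (RInt_ext s1 s1_closed) by (intros; apply s1_closed_form).
  rewrite (RInt_antiderivative s2_closed).
  - unfold s2_closed. rewrite sin_0. field.
  - intro x. unfold s2_closed, s1_closed. auto_derive; auto. trig_identity x.
  - intro x. unfold s1_closed. auto_derive. auto.
Qed.

Definition G (u v l : R) : R :=
  2*l/3 + 2/3*sin l + (1 - u*v)*(sin l)^3/9 - (u+v)/3*s1_closed l.
Definition dG (u v l : R) : R :=
  2/3 + 2/3*cos l + (1 - u*v)*(sin l)^2*cos l/3 - (u+v)/3*(sin l)^3.

Lemma G_derive (u v l : R) : derivable_pt_lim (G u v) l (dG u v l).
Proof. apply is_derive_Reals. unfold G, dG, s1_closed. auto_derive; auto. trig_identity l. Qed.

Lemma G_0 (u v : R) : G u v 0 = 0.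
Proof. unfold G, s1_closed. rewrite sin_0, cos_0. field. Qed.

Lemma G_PI (u v : R) : G u v PI = 2*PI/3 - 4*(u+v)/9.
Proof. unfold G, s1_closed. rewrite sin_PI, cos_PI. field. Qed.

Lemma gfun_G (r l a b : R) : tan r <> 0 -> cos a <> 0 -> cos b <> 0 ->
  gfun r l a b = G (1/(tan r*cos a)) (1/(tan r*cos b)) l.
Proof.
  intros ht ha hb. unfold gfun, G.
  rewrite s1_closed_form, s2_closed_form. unfold s, s1_closed, s2_closed.
  field. auto.
Qed.

Definition cot (p : R) : R := cos p / sin p.

Lemma atan_cot (w : R) : 0 < w -> 0 < atan w < PI/2 /\ cot (atan w) = 1 / w.
Proof.
  intros hw. assert (hsq : 0 < sqrt (1 + w²)) by (apply sqrt_lt_R0; unfold Rsqr; nra).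
  split; [split|].
  - rewrite <- atan_0. now apply atan_increasing.
  - apply atan_bound.
  - unfold cot. rewrite sin_atan, cos_atan. field. lra.
Qed.

Definition hdiag (p : R) : R := 4/3*p + 4/9*(sin p * cos p).

Lemma G_diag (p : R) : sin p <> 0 -> G (cot p) (cot p) (2*p) = hdiag p.
Proof.
  intros hp. unfold G, hdiag, s1_closed, cot. rewrite sin_2a, cos_2a.
  trig_identity p.
Qed.

Lemma G_PI_lt_hdiag (p : R) : 0 < p < PI/2 -> G (cot p) (cot p) PI < hdiag p.
Proof.
  intros hp. assert (PI2 := PI2_RGT_0). destruct (sin_cos_pos p hp) as [hs _].
  set (k := fun q => 4/3*q + 4/9*(sin q * cos q) + 8/9*(cos q / sin q) - 2*PI/3).
  set (dk := fun q => 4/3 + 4/9*(cos q * cos q - sin q * sin q) - 8/9/(sin q * sin q)).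
  assert (Hk : k p = hdiag p - G (cot p) (cot p) PI)
    by (rewrite G_PI; unfold k, hdiag, cot; field; lra).
  assert (k (PI/2) = 0) by (unfold k; rewrite sin_PI2, cos_PI2; field).
  enough (k (PI/2) < k p) by lra.
  apply (decreasing_of_deriv_neg k dk); [lra| |].
  - intros z hz. assert (0 < sin z) by (apply sin_gt_0; lra).
    apply is_derive_Reals. unfold k, dk. auto_derive; [lra|]. trig_identity z. lra.
  - intros z hz. assert (0 < sin z) by (apply sin_gt_0; lra).
    assert (0 < cos z) by (apply cos_gt_0; lra).
    assert (E : dk z * (sin z * sin z) = - 8/9 * (cos z * cos z) * (cos z * cos z)).
    { unfold dk. trig_identity z. lra. }
    assert (0 < (cos z * cos z) * (cos z * cos z)) by (apply Rmult_lt_0_compat; nra).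
    nra.
Qed.

Definition crit (p1 p2 l : R) : R :=
  cos (p1 - p2) - cos (p1 + p2 - l) + sin l * sin (p1 + p2 - l).
Definition dcrit (p1 p2 l : R) : R :=
  - sin (p1 + p2 - l) + cos l * sin (p1 + p2 - l) - sin l * cos (p1 + p2 - l).

Lemma crit_derive (p1 p2 l : R) : derivable_pt_lim (crit p1 p2) l (dcrit p1 p2 l).
Proof. apply is_derive_Reals. unfold crit, dcrit. auto_derive; auto. unfold Rminus. ring. Qed.

Lemma dG_crit (p1 p2 l : R) : sin p1 <> 0 -> sin p2 <> 0 ->
  3 * sin p1 * sin p2 * dG (cot p1) (cot p2) l = (1 + cos l) * crit p1 p2 l.
Proof.
  intros h1 h2. unfold dG, crit, cot. rewrite cos_minus, cos_sum_sub, sin_sum_sub.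
  trig_identity l.
Qed.

Definition gap (s c z : R) : R :=
  3*z + (cos z - 2*s*c*sin z)*(2*s*c*cos z + (c*c - s*s)*sin z)
  - 2*s*c - 2*s*s*(sin z / cos z).
Definition dgap (s c z : R) : R :=
  3 + (- sin z - 2*s*c*cos z)*(2*s*c*cos z + (c*c - s*s)*sin z)
  + (cos z - 2*s*c*sin z)*(- 2*s*c*sin z + (c*c - s*s)*cos z)
  - 2*s*s/(cos z * cos z).

Lemma gap_derive (s c z : R) : cos z <> 0 -> derivable_pt_lim (gap s c) z (dgap s c z).
Proof. intro hz. apply is_derive_Reals. unfold gap, dgap. auto_derive; [auto|]. trig_identity z. Qed.

Lemma dgap_pos (s c z : R) : 0 <= s -> 0 < c -> s*s + c*c = 1 ->
  0 < cos z -> 0 <= sin z -> 0 < c * cos z - s * sin z -> 0 < dgap s c z.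
Proof.
  intros hs hc hsc hcz hsz hA.
  set (D := c * cos z - s * sin z) in *.
  assert (E : dgap s c z * (cos z * cos z) =
    4*c*c*D^2*(cos z * cos z) + 2*(sin z * sin z)*(D*(c * cos z + s * sin z))).
  { unfold dgap, D. assert (H := sin2_cos2 z); unfold Rsqr in H.
    field_simplify_eq; [|lra]. simpl. clear - hsc H. nsatz. }
  assert (0 < c * cos z + s * sin z) by nra.
  assert (0 < 4*c*c*D^2*(cos z * cos z))
    by (repeat apply Rmult_lt_0_compat; try lra; apply pow_lt; lra).
  assert (0 <= 2*(sin z * sin z)*(D*(c * cos z + s * sin z))) by (apply Rmult_le_pos; nra).
  assert (0 < cos z * cos z) by nra.
  nra.
Qed.

Lemma gap_0 (s c : R) : gap s c 0 = 0.
Proof. unfold gap. rewrite sin_0, cos_0. field. Qed.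

Lemma gap_pos (s c x : R) : 0 <= s -> 0 < c -> s*s + c*c = 1 -> 0 < x < PI/2 ->
  s * sin x < c * cos x -> 0 < gap s c x.
Proof.
  intros hs hc hsc hx hA. assert (PI2 := PI2_RGT_0).
  rewrite <- (gap_0 s c). apply (increasing_of_deriv_pos _ (dgap s c)); [lra| |].
  - intros z hz. apply gap_derive. assert (0 < cos z) by (apply cos_gt_0; lra). lra.
  - intros z hz. assert (0 < cos z) by (apply cos_gt_0; lra).
    assert (0 <= sin z) by (apply sin_ge_0; lra).
    assert (cos x <= cos z) by (apply cos_decr_1; lra).
    assert (sin z <= sin x) by (apply sin_incr_1; lra).
    apply dgap_pos; auto. nra.
Qed.

Section InteriorMaximum.

Variables p1 p2 L : R.
Hypothesis hp1 : 0 < p1 < PI/2.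
Hypothesis hp2 : 0 < p2 < PI/2.
Hypothesis hL : 0 < L < PI.
Hypothesis L_max :
  forall z, 0 <= z <= PI -> G (cot p1) (cot p2) z <= G (cot p1) (cot p2) L.

Local Notation shift := (p1 + p2 - L).

Lemma crit_at_max : crit p1 p2 L = 0.
Proof.
  destruct (sin_cos_pos p1 hp1) as [hs1 _]. destruct (sin_cos_pos p2 hp2) as [hs2 _].
  assert (dG0 : dG (cot p1) (cot p2) L = 0).
  { assert (pr : derivable_pt (G (cot p1) (cot p2)) L) by (eexists; apply G_derive).
    rewrite <- (derive_pt_eq_0 _ _ _ pr (G_derive _ _ L)).
    apply (deriv_maximum _ 0 PI L pr); try lra.
    intros z h0 hPI. apply L_max. lra. }
  assert (E := dG_crit p1 p2 L ltac:(lra) ltac:(lra)).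
  rewrite dG0, Rmult_0_r in E.
  assert (0 < 1 + cos L) by (apply one_add_cos_pos; lra).
  nra.
Qed.

Lemma dcrit_at_max : dcrit p1 p2 L <= 0.
Proof.
  destruct (sin_cos_pos p1 hp1) as [hs1 _]. destruct (sin_cos_pos p2 hp2) as [hs2 _].
  (* Otherwise crit, hence dG, would be negative just left of L. *)
  apply Rnot_lt_le. intro hpos.
  destruct (deriv_pos_lt_left _ _ _ (crit_derive p1 p2 L) hpos) as [e [he crit_neg]].
  rewrite crit_at_max in crit_neg.
  set (d := Rmin e L / 2).
  assert (hd : 0 < d <= e / 2 /\ d <= L / 2).
  { assert (0 < Rmin e L) by (apply Rmin_pos; lra).
    assert (Rmin e L <= e) by apply Rmin_l. assert (Rmin e L <= L) by apply Rmin_r.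
    unfold d. lra. }
  assert (G (cot p1) (cot p2) L < G (cot p1) (cot p2) (L - d)).
  { apply (decreasing_of_deriv_neg _ (dG (cot p1) (cot p2))); [lra | intros; apply G_derive |].
    intros z hz.
    assert (E := dG_crit p1 p2 z ltac:(lra) ltac:(lra)).
    assert (crit p1 p2 z < 0) by (apply crit_neg; lra).
    assert (0 < 1 + cos z) by (apply one_add_cos_pos; lra).
    assert (0 < 3 * sin p1 * sin p2) by nra.
    nra. }
  assert (G (cot p1) (cot p2) (L - d) <= G (cot p1) (cot p2) L) by (apply L_max; lra).
  lra.
Qed.

Lemma shift_nonneg : 0 <= shift.
Proof.
  apply Rnot_lt_le. intro hneg.
  set (A := L - p1 - p2).
  assert (hsin := sin_add_lt_of_cos_bound A L ltac:(unfold A; lra) ltac:(lra)).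
  assert (hW := crit_at_max). assert (hdW := dcrit_at_max).
  unfold crit, dcrit in hW, hdW.
  replace (p1 + p2 - L) with (- A) in hW, hdW by (unfold A; ring).
  rewrite sin_neg, cos_neg in hW, hdW.
  assert (cos (p1 - p2) <= 1) by apply COS_bound.
  assert (sin (A + L) < sin A) by (apply hsin; lra).
  rewrite sin_plus in *. lra.
Qed.

Lemma cos_sum_at_max : cos (p1 + p2) = cos L * cos shift - sin L * sin shift.
Proof. rewrite <- cos_plus. f_equal. ring. Qed.

Lemma cos_diff_at_max : cos (p1 - p2) = cos shift - sin L * sin shift.
Proof. assert (hW := crit_at_max). unfold crit in hW. lra. Qed.

Lemma shift_cos_pos : 0 < cos shift.
Proof.
  destruct (sin_cos_pos p1 hp1) as [hs1 _]. destruct (sin_cos_pos p2 hp2) as [hs2 _].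
  assert (E : cos shift * (1 - cos L) = 2 * sin p1 * sin p2).
  { assert (Hdiff : cos (p1 - p2) - cos (p1 + p2) = 2 * sin p1 * sin p2)
      by (rewrite cos_minus, cos_plus; ring).
    rewrite <- Hdiff, cos_diff_at_max, cos_sum_at_max. ring. }
  assert (cos L < cos 0) by (apply cos_decreasing_1; lra).
  rewrite cos_0 in *. nra.
Qed.

Lemma shift_lt_PI2 : shift < PI/2.
Proof.
  apply Rnot_le_lt. intro h. assert (hc := shift_cos_pos).
  assert (cos shift <= 0) by (apply cos_le_0; lra). lra.
Qed.

Lemma gap_constraint : sin (L/2) * sin shift < cos (L/2) * cos shift.
Proof.
  destruct (sin_cos_pos p1 hp1) as [_ hc1]. destruct (sin_cos_pos p2 hp2) as [_ hc2].
  destruct (sin_cos_pos (L/2) ltac:(lra)) as [hsL hcL].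
  destruct (half_angle L) as [sL cL].
  assert (hx := shift_nonneg). assert (hxPI2 := shift_lt_PI2).
  assert (0 <= sin shift) by (apply sin_ge_0; lra).
  assert (E : 2 * cos (L/2) * (cos (L/2) * cos shift - 2 * sin (L/2) * sin shift)
              = 2 * cos p1 * cos p2).
  { assert (Hsum : cos (p1 - p2) + cos (p1 + p2) = 2 * cos p1 * cos p2)
      by (rewrite cos_minus, cos_plus; ring).
    rewrite <- Hsum, cos_diff_at_max, cos_sum_at_max, sL, cL.
    assert (HH := sin2_cos2 (L/2)). unfold Rsqr in HH.
    set (a := sin (L/2)) in *. set (b := cos (L/2)) in *.
    set (c1 := sin shift). set (c2 := cos shift). clear - HH. nsatz. }
  assert (0 < 2 * cos p1 * cos p2) by nra.
  assert (0 < cos (L/2) * cos shift - 2 * sin (L/2) * sin shift) by nra.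
  nra.
Qed.

Lemma gap_at_max :
  9/2 * ((hdiag p1 + hdiag p2)/2 - G (cot p1) (cot p2) L)
  = gap (sin (L/2)) (cos (L/2)) shift.
Proof.
  destruct (sin_cos_pos p1 hp1) as [hs1 _]. destruct (sin_cos_pos p2 hp2) as [hs2 _].
  assert (hcx := shift_cos_pos).
  assert (E : 9/2 * ((hdiag p1 + hdiag p2)/2 - G (cot p1) (cot p2) L) =
    3 * shift + (cos shift - sin L * sin shift) * sin (p1 + p2)
    - sin L - (1 - cos L) * (sin shift / cos shift)).
  { assert (hW := crit_at_max). unfold crit in hW.
    unfold hdiag, G, cot, s1_closed.
    assert (E1 := cos_sum_sub p1 p2 L). assert (E2 := sin_sum_sub p1 p2 L).
    rewrite cos_minus in hW. rewrite sin_plus.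
    set (cx := cos shift) in *. set (sx := sin shift) in *.
    assert (H1 := sin2_cos2 p1). assert (H2 := sin2_cos2 p2). assert (H3 := sin2_cos2 L).
    unfold Rsqr in *. field_simplify_eq; [simpl; nsatz | repeat split; lra]. }
  rewrite E.
  assert (Hs : sin (p1 + p2) = sin L * cos shift + cos L * sin shift)
    by (rewrite <- sin_plus; f_equal; ring).
  rewrite Hs.
  destruct (half_angle L) as [sL cL]. rewrite sL, cL. unfold gap.
  assert (HH := sin2_cos2 (L/2)). unfold Rsqr in HH.
  field_simplify_eq; [|lra].
  set (a := sin (L/2)) in *. set (b := cos (L/2)) in *.
  set (c1 := sin shift). set (c2 := cos shift). simpl. clear - HH. nsatz.
Qed.

Lemma interior_max_le :
  G (cot p1) (cot p2) L <= (hdiag p1 + hdiag p2)/2 /\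
  (G (cot p1) (cot p2) L = (hdiag p1 + hdiag p2)/2 -> p1 = p2 /\ L = p1 + p2).
Proof.
  assert (E := gap_at_max). assert (hx := shift_nonneg).
  destruct (Rle_lt_or_eq_dec 0 shift hx) as [hpos | hzero].
  - destruct (sin_cos_pos (L/2) ltac:(lra)) as [hsL hcL].
    assert (HH := sin2_cos2 (L/2)). unfold Rsqr in HH.
    assert (0 < gap (sin (L/2)) (cos (L/2)) shift).
    { apply gap_pos; try lra.
      - split; [lra | apply shift_lt_PI2].
      - apply gap_constraint. }
    split; intros; lra.
  - rewrite <- hzero, gap_0 in E. split; [lra|]. intros _. split; [|lra].
    assert (hcos := cos_diff_at_max). rewrite <- hzero, sin_0, cos_0 in hcos.
    assert (cos (p1 - p2) = cos 0) by (rewrite cos_0; lra).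
    destruct (Rle_dec p2 p1) as [h | h].
    + assert (p1 - p2 = 0) by (apply cos_inj; lra). lra.
    + assert (p2 - p1 = 0).
      { apply cos_inj; try lra. replace (p2 - p1) with (- (p1 - p2)) by ring.
        rewrite cos_neg. lra. }
      lra.
Qed.

End InteriorMaximum.

Lemma G_max_exists (u v : R) :
  exists L, 0 <= L <= PI /\ forall z, 0 <= z <= PI -> G u v z <= G u v L.
Proof.
  destruct (continuity_ab_maj (G u v) 0 PI) as [L [L_max hL]].
  - assert (PI_RGT_0 := PI_RGT_0). lra.
  - intros c _. apply derivable_continuous_pt. eexists. apply G_derive.
  - exists L. auto.
Qed.

Lemma max_le_hdiag_mean (p1 p2 L : R) :
  0 < p1 < PI/2 -> 0 < p2 < PI/2 -> 0 <= L <= PI ->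
  (forall z, 0 <= z <= PI -> G (cot p1) (cot p2) z <= G (cot p1) (cot p2) L) ->
  G (cot p1) (cot p2) L <= (hdiag p1 + hdiag p2)/2 /\
  (G (cot p1) (cot p2) L = (hdiag p1 + hdiag p2)/2 -> p1 = p2 /\ L = p1 + p2).
Proof.
  intros hp1 hp2 hL L_max.
  destruct (Rle_lt_or_eq_dec 0 L (proj1 hL)) as [hL0 | <-].
  2:{ rewrite G_0.
      destruct (sin_cos_pos p1 hp1), (sin_cos_pos p2 hp2).
      assert (0 < hdiag p1 + hdiag p2) by (unfold hdiag; nra).
      split; lra. }
  destruct (Rle_lt_or_eq_dec L PI (proj2 hL)) as [hLPI | ->].
  2:{ assert (E : G (cot p1) (cot p2) PI
                  = (G (cot p1) (cot p1) PI + G (cot p2) (cot p2) PI)/2)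
        by (rewrite !G_PI; field).
      assert (H1 := G_PI_lt_hdiag p1 hp1). assert (H2 := G_PI_lt_hdiag p2 hp2).
      split; lra. }
  now apply interior_max_le.
Qed.

Lemma G_le_hdiag_mean (p1 p2 l : R) :
  0 < p1 < PI/2 -> 0 < p2 < PI/2 -> 0 <= l <= PI ->
  G (cot p1) (cot p2) l <= (hdiag p1 + hdiag p2)/2 /\
  (G (cot p1) (cot p2) l = (hdiag p1 + hdiag p2)/2 -> p1 = p2 /\ l = p1 + p2).
Proof.
  intros hp1 hp2 hl.
  destruct (G_max_exists (cot p1) (cot p2)) as [L [hL L_max]].
  destruct (max_le_hdiag_mean p1 p2 L hp1 hp2 hL L_max) as [le_mean _].
  assert (G (cot p1) (cot p2) l <= G (cot p1) (cot p2) L) by auto.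
  split; [lra|]. intros eq_mean.
  apply (max_le_hdiag_mean p1 p2 l); auto.
  intros z hz. rewrite eq_mean. specialize (L_max z hz). lra.
Qed.

Lemma G_diag_lt (p l : R) : 0 < p < PI/2 -> 0 <= l <= PI -> l <> 2 * p ->
  G (cot p) (cot p) l < hdiag p.
Proof.
  intros hp hl hne.
  destruct (G_le_hdiag_mean p p l hp hp hl) as [le_mean eq_mean].
  destruct (Rle_lt_or_eq_dec _ _ le_mean) as [lt | eq]; [lra|].
  destruct (eq_mean eq). lra.
Qed.

Definition theta (r a : R) : R := atan (tan r * cos a).

Lemma theta_cot (r a : R) : 0 < r < PI/2 -> 0 <= a < PI/2 ->
  0 < theta r a < PI/2 /\ cot (theta r a) = 1 / (tan r * cos a).
Proof.
  intros hr ha. apply atan_cot.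
  assert (0 < tan r) by (apply tan_gt_0; lra).
  assert (0 < cos a) by (apply cos_gt_0; lra).
  nra.
Qed.

Lemma gfun_theta (r a b l : R) : 0 < r < PI/2 -> 0 <= a < PI/2 -> 0 <= b < PI/2 ->
  gfun r l a b = G (cot (theta r a)) (cot (theta r b)) l.
Proof.
  intros hr ha hb.
  rewrite (proj2 (theta_cot r a hr ha)), (proj2 (theta_cot r b hr hb)).
  assert (0 < tan r) by (apply tan_gt_0; lra).
  assert (0 < cos a) by (apply cos_gt_0; lra).
  assert (0 < cos b) by (apply cos_gt_0; lra).
  apply gfun_G; lra.
Qed.

Lemma theta_inj (r a b : R) : 0 < r < PI/2 -> 0 <= a < PI/2 -> 0 <= b < PI/2 ->
  theta r a = theta r b -> a = b.
Proof.
  intros hr ha hb E.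
  assert (0 < tan r) by (apply tan_gt_0; lra).
  assert (tan r * cos a = tan r * cos b)
    by (rewrite <- (tan_atan (tan r * cos a)), <- (tan_atan (tan r * cos b)); exact (f_equal tan E)).
  apply cos_inj; try lra. apply Rmult_eq_reg_l with (tan r); lra.
Qed.

Lemma fsup_diag (r a : R) : 0 < r < PI/2 -> 0 <= a < PI/2 ->
  fsup r a a = hdiag (theta r a).
Proof.
  intros hr ha. destruct (theta_cot r a hr ha) as [hp _].
  enough (hdiag (theta r a) <= fsup r a a <= hdiag (theta r a)) by lra.
  apply Lub_Rbar_real_bounds.
  - exists (2 * theta r a). split; [lra|].
    destruct (sin_cos_pos _ hp).
    rewrite gfun_theta, G_diag by (auto; lra). reflexivity.
  - intros y [l [hl ->]]. rewrite gfun_theta by auto.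
    replace (hdiag (theta r a)) with ((hdiag (theta r a) + hdiag (theta r a))/2) by field.
    apply G_le_hdiag_mean; auto. lra.
Qed.

Lemma fsup_le_hdiag_mean (r a b : R) : 0 < r < PI/2 -> 0 <= a < PI/2 -> 0 <= b < PI/2 ->
  fsup r a b <= (hdiag (theta r a) + hdiag (theta r b))/2 /\
  (fsup r a b = (hdiag (theta r a) + hdiag (theta r b))/2 -> a = b).
Proof.
  intros hr ha hb.
  destruct (theta_cot r a hr ha) as [hpa _], (theta_cot r b hr hb) as [hpb _].
  destruct (G_max_exists (cot (theta r a)) (cot (theta r b))) as [L [hL L_max]].
  assert (fsup r a b <= G (cot (theta r a)) (cot (theta r b)) L).
  { apply (Lub_Rbar_real_bounds _ (gfun r 0 a b)).
    - exists 0. split; [|reflexivity]. assert (PI_RGT_0 := PI_RGT_0). lra.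
    - intros y [l [hl ->]]. rewrite gfun_theta by auto. apply L_max. lra. }
  destruct (G_le_hdiag_mean _ _ L hpa hpb hL) as [le_mean eq_mean].
  split; [lra|]. intros E.
  apply (theta_inj r a b hr ha hb), eq_mean. lra.
Qed.

Theorem lemma4 (r : R) (hr : 0 < r < PI / 2) :
  (forall a : R, 0 <= a < PI / 2 ->
     let l0 := 2 * atan (tan r * cos a) in
     0 <= l0 < PI /\
     (forall l : R, 0 <= l < PI -> l <> l0 -> gfun r l a a < gfun r l0 a a)) /\
  (forall a b : R, 0 <= a < PI / 2 -> 0 <= b < PI / 2 ->
     fsup r a b <= (fsup r a a + fsup r b b) / 2 /\
     (fsup r a b = (fsup r a a + fsup r b b) / 2 -> a = b)).
Proof.
  split.
  - intros a ha l0. change l0 with (2 * theta r a).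
    destruct (theta_cot r a hr ha) as [hp _]. destruct (sin_cos_pos _ hp).
    split; [lra|]. intros l hl hne.
    rewrite !gfun_theta, G_diag by (auto; lra).
    apply G_diag_lt; auto. lra.
  - intros a b ha hb. rewrite !fsup_diag by auto.
    now apply fsup_le_hdiag_mean.
Qed.
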